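(* Let $\mathbb{K}$ be a field, $m\ge 3$, $R=\mathbb{K}[T_1,\dots,T_m]$, $\mathbf{b}=(b_1,\dots,b_m)\in\mathbb{N}^m$ with $b_i\ne0$ for at least two $i$, $|\mathbf{b}|=\sum b_i$, and $I=\langle T_1^{|\mathbf{b}|},\dots,T_m^{|\mathbf{b}|},T_1^{b_1}\cdots T_m^{b_m}\rangle$ (the equi-generated case). Let $L\subset S=R[X_1,\dots,X_m,W]$ be the defining ideal of the Rees algebra of $I$ and $L_1$ its component of degree one in $X_1,\dots,X_m,W$. If $\ell\in\mathbb{Z}$ satisfies $\ell\ge\frac{(m-1)(|\mathbf{b}|-1)}{m}$, then $L_1S:(T_1T_2\cdots T_m)^{\ell}=L$. In particular, $L_1S:(T_1T_2\cdots T_m)^{|\mathbf{b}|}=L$.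
   Context: $L$ is the kernel of the $R$-algebra map $S\to R[Z]$ given by $X_i\mapsto T_i^{|\mathbf{b}|}Z$ and $W\mapsto T_1^{b_1}\cdots T_m^{b_m}Z$; it is graded by total degree in $X_1,\dots,X_m,W$. *)

From HB Require Import structures.
From mathcomp Require Import all_boot all_order all_algebra.
From mathcomp Require Import mpoly.
Set Implicit Arguments. Unset Strict Implicit. Unset Printing Implicit Defensive.
Import GRing.Theory.
Local Open Scope ring_scope.

(* Variables of S = K[T_1..T_m, X_1..X_m, W] are indexed by 'I_(m + m).+1:
   T_i  is index i        (0 <= i < m),
   X_i  is index m + i    (0 <= i < m),
   W    is index m + m. *)
Definition tvar (m : nat) (i : 'I_m) : 'I_(m + m).+1 := inord i.
Definition xvar (m : nat) (i : 'I_m) : 'I_(m + m).+1 := inord (m + i).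
Definition wvar (m : nat) : 'I_(m + m).+1 := inord (m + m).

Notation Sring K m := {mpoly K[(m + m).+1]}.
(* The ring R[Z] = K[T_1..T_m, Z]; T_i is index i, Z is index m. *)
Notation RZring K m := {mpoly K[m.+1]}.

Definition Tz (K : fieldType) (m : nat) (j : nat) : RZring K m := 'X_(inord j).
Definition Zz (K : fieldType) (m : nat) : RZring K m := 'X_(ord_max).

Definition bsum (m : nat) (b : 'I_m -> nat) : nat := (\sum_(i < m) b i)%N.

Definition rees_img (K : fieldType) (m : nat) (b : 'I_m -> nat)
    (j : 'I_(m + m).+1) : RZring K m :=
  if (j < m)%N then Tz K m j
  else if (j < m + m)%N then Tz K m (j - m) ^+ bsum b * Zz K m
  else (\prod_(i < m) Tz K m i ^+ b i) * Zz K m.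

Definition rees_map (K : fieldType) (m : nat) (b : 'I_m -> nat) (p : Sring K m)
    : RZring K m :=
  comp_mpoly [tuple rees_img K b j | j < (m + m).+1] p.

Definition reesL (K : fieldType) (m : nat) (b : 'I_m -> nat) (p : Sring K m) : Prop :=
  rees_map b p = 0.

Definition xwdeg (m : nat) (mon : 'X_{1..(m + m).+1}) : nat :=
  ((\sum_(i < m) mon (xvar i)) + mon (wvar m))%N.

Definition xw_homog (K : fieldType) (m d : nat) (p : Sring K m) : Prop :=
  forall mon, mon \in msupp p -> xwdeg mon = d.

Definition reesL1 (K : fieldType) (m : nat) (b : 'I_m -> nat) (p : Sring K m) : Prop :=
  reesL b p /\ xw_homog 1 p.

Definition in_ideal_gen (K : fieldType) (m : nat) (P : Sring K m -> Prop)
    (g : Sring K m) : Prop :=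
  exists s : seq (Sring K m * Sring K m),
    (forall x, x \in s -> P x.2) /\ g = \sum_(x <- s) x.1 * x.2.

Definition in_colon (K : fieldType) (m : nat) (P : Sring K m -> Prop)
    (f g : Sring K m) : Prop :=
  in_ideal_gen P (g * f).

Definition Tprod (K : fieldType) (m : nat) : Sring K m := \prod_(i < m) 'X_(tvar i).

From HB Require Import structures.
From mathcomp Require Import all_boot all_order all_algebra.
From mathcomp Require Import mpoly.
From mathcomp Require Import zify.
Import GRing.Theory.
Set Implicit Arguments. Unset Strict Implicit. Unset Printing Implicit Defensive.
Local Open Scope ring_scope.

(* The map S -> R[Z] sends monomials to monomials: T^t X^x W^w goes to
   prod_k T_k^(t_k + |b| x_k + b_k w) * Z^(sum x + w). So L is spanned by the
   binomials X^U - X^V with U, V in one fibre of this exponent map, and the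
   T-degree is constant on fibres. Multiplying by (T_1...T_m)^l lifts every
   monomial to T-degree at least m l > (m - 1) |b| - m, and there any two
   monomials of a fibre are joined by moves X^A C ~> X^A' C with X^A - X^A' a
   binomial of L_1: while W occurs, the pigeonhole principle yields some
   T_i^(|b| - b_i) beside it, and W T_i^(|b| - b_i) ~> X_i prod_(k != i) T_k^b_k
   removes it; two W-free monomials of a fibre differ by exchanges
   X_i T_j^|b| ~> X_j T_i^|b|. *)

Lemma sum_nat_delta (I : finType) (k : I) (F : I -> nat) :
  (\sum_i (i == k) * F i)%N = F k.
Proof. by rewrite (bigD1 k) //= eqxx mul1n big1 ?addn0 // => i /negbTE ->. Qed.

Lemma sum_delta (I : finType) (k : I) : (\sum_i (i == k) = 1)%N.
Proof. by rewrite (bigD1 k) //= eqxx big1 // => i /negbTE ->. Qed.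

Lemma mpolyMX_eq0 (R : nzRingType) n (p : {mpoly R[n]}) (M : 'X_{1..n}) :
  p * 'X_[M] = 0 -> p = 0.
Proof. by move=> pM0; apply/mpolyP => N; rewrite -(mcoeffMX p M) pM0 !mcoeff0. Qed.

Section MonomialFibers.
Variables (R : nzRingType) (n k : nat) (phi : 'X_{1..n} -> 'X_{1..k}).
Variable s : seq 'X_{1..n}.

Definition fiber_rep (N : 'X_{1..k}) : 'X_{1..n} :=
  nth 0%MM s (find (fun U => phi U == N) s).

Lemma phi_fiber_rep U : U \in s -> phi (fiber_rep (phi U)) = phi U.
Proof.
by move=> Us; apply/eqP/(nth_find _ (a := fun V => phi V == phi U)); apply/hasP; exists U.
Qed.

Lemma fiber_rep_sum_eq0 (c : 'X_{1..n} -> R) :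
  \sum_(U <- s) c U *: ('X_[phi U] : {mpoly R[k]}) = 0 ->
  \sum_(U <- s) c U *: ('X_[fiber_rep (phi U)] : {mpoly R[n]}) = 0.
Proof.
move=> sum0; apply/mpolyP => N; rewrite mcoeff0 raddf_sum /=.
have [/hasP [U0 U0s /eqP <-] | /hasPn noN] := boolP (has (fun U => fiber_rep (phi U) == N) s).
  transitivity ((\sum_(U <- s) c U *: ('X_[phi U] : {mpoly R[k]}))@_(phi U0));
    last by rewrite sum0 mcoeff0.
  rewrite raddf_sum /=; apply: eq_big_seq => U Us; rewrite !mcoeffZ !mcoeffX.
  congr (_ * (nat_of_bool _)%:R); apply/eqP/eqP => [eq_rep | -> //].
  by rewrite -(phi_fiber_rep Us) eq_rep phi_fiber_rep.
by rewrite big_seq big1 // => U /noN /negbTE; rewrite mcoeffZ mcoeffX => ->; rewrite mulr0.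
Qed.

End MonomialFibers.

Section IdealGen.
Variables (K : fieldType) (m : nat) (P : Sring K m -> Prop).
Implicit Types p q : Sring K m.

Lemma in_ideal_gen0 : in_ideal_gen P 0.
Proof. by exists [::]; rewrite big_nil. Qed.

Lemma in_ideal_gen_mem p : P p -> in_ideal_gen P p.
Proof. by exists [:: (1, p)]; rewrite big_seq1 mul1r; split => // x /[!inE] /eqP ->. Qed.

Lemma in_ideal_genD p q : in_ideal_gen P p -> in_ideal_gen P q -> in_ideal_gen P (p + q).
Proof.
move=> [s [Ps ->]] [s' [Ps' ->]]; exists (s ++ s'); rewrite big_cat; split => // x.
by rewrite mem_cat => /orP[/Ps|/Ps'].
Qed.

Lemma in_ideal_genMl r p : in_ideal_gen P p -> in_ideal_gen P (r * p).
Proof.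
move=> [s [Ps ->]]; exists [seq (r * x.1, x.2) | x <- s]; split; first by move=> _ /mapP [x /Ps ? ->].
by rewrite big_map mulr_sumr; apply: eq_bigr => x _; rewrite mulrA.
Qed.

Lemma in_ideal_gen_sum (I : eqType) (r : seq I) (F : I -> Sring K m) :
  (forall i, i \in r -> in_ideal_gen P (F i)) -> in_ideal_gen P (\sum_(i <- r) F i).
Proof.
elim: r => [|i r IH] Pr; first by rewrite big_nil; apply: in_ideal_gen0.
rewrite big_cons; apply: in_ideal_genD; first by apply: Pr; rewrite inE eqxx.
by apply: IH => j jr; apply: Pr; rewrite inE jr orbT.
Qed.

End IdealGen.

Section ReesVariables.
Variable m : nat.
Local Notation n2 := (m + m).+1.

Lemma tvarE (i : 'I_m) : tvar i = i :> nat.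
Proof. by rewrite inordK //; have := ltn_ord i; lia. Qed.

Lemma xvarE (i : 'I_m) : xvar i = (m + i)%N :> nat.
Proof. by rewrite inordK //; have := ltn_ord i; lia. Qed.

Lemma wvarE : wvar m = (m + m)%N :> nat.
Proof. by rewrite inordK. Qed.

Lemma tvar_eq (i k : 'I_m) : (tvar i == tvar k) = (i == k).
Proof. by rewrite -val_eqE /= !tvarE. Qed.

Lemma xvar_eq (i k : 'I_m) : (xvar i == xvar k) = (i == k).
Proof. by rewrite -val_eqE /= !xvarE eqn_add2l. Qed.

Lemma tvar_xvar (i k : 'I_m) : (tvar i == xvar k) = false.
Proof. by apply/negbTE; rewrite -val_eqE /= tvarE xvarE; have := ltn_ord i; lia. Qed.

Lemma tvar_wvar (i : 'I_m) : (tvar i == wvar m) = false.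
Proof. by apply/negbTE; rewrite -val_eqE /= tvarE wvarE; have := ltn_ord i; lia. Qed.

Lemma xvar_wvar (i : 'I_m) : (xvar i == wvar m) = false.
Proof. by apply/negbTE; rewrite -val_eqE /= xvarE wvarE; have := ltn_ord i; lia. Qed.

Lemma xvar_tvar (i k : 'I_m) : (xvar i == tvar k) = false.
Proof. by rewrite eq_sym tvar_xvar. Qed.

Lemma wvar_tvar (i : 'I_m) : (wvar m == tvar i) = false.
Proof. by rewrite eq_sym tvar_wvar. Qed.

Lemma wvar_xvar (i : 'I_m) : (wvar m == xvar i) = false.
Proof. by rewrite eq_sym xvar_wvar. Qed.

Definition rees_varE := (tvar_eq, xvar_eq, tvar_xvar, xvar_tvar, tvar_wvar, wvar_tvar,
  xvar_wvar, wvar_xvar).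

Variant rees_var_spec : 'I_n2 -> Type :=
  | TVar i : rees_var_spec (tvar i)
  | XVar i : rees_var_spec (xvar i)
  | WVar : rees_var_spec (wvar m).

Lemma rees_varP j : rees_var_spec j.
Proof.
have := ltn_ord j; rewrite ltnS => jmm.
case: (ltnP j m) => [jm | mj].
  suff -> : j = tvar (Ordinal jm) by constructor.
  by apply: val_inj; rewrite /= tvarE.
case: (ltnP j (m + m)) => [jm' | ?].
  have jm : (j - m < m)%N by lia.
  suff -> : j = xvar (Ordinal jm) by constructor.
  by apply: val_inj; rewrite /= xvarE /=; lia.
suff -> : j = wvar m by constructor.
by apply: val_inj; rewrite /= wvarE; lia.
Qed.

Lemma rees_mnm_ext (U V : 'X_{1..n2}) :
  (forall i, U (tvar i) = V (tvar i)) -> (forall i, U (xvar i) = V (xvar i)) ->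
  U (wvar m) = V (wvar m) -> U = V.
Proof. by move=> eqT eqX eqW; apply/mnmP => j; case: (rees_varP j). Qed.

Lemma sum_rees_var (F : 'I_n2 -> nat) :
  (\sum_(j < n2) F j = \sum_(i < m) F (tvar i) + \sum_(i < m) F (xvar i) + F (wvar m))%N.
Proof.
rewrite big_ord_recr /= big_split_ord /=; congr (_ + _ + F _)%N; last exact/val_inj/esym/wvarE.
- by apply: eq_bigr => i _; congr F; apply/val_inj; rewrite /= tvarE.
- by apply: eq_bigr => i _; congr F; apply/val_inj; rewrite /= xvarE.
Qed.

End ReesVariables.

Section ReesAlgebra.
Variables (K : fieldType) (m : nat) (b : 'I_m -> nat).
Local Notation n2 := (m + m).+1.
Local Notation B := (bsum b).
Implicit Types U V A : 'X_{1..n2}.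

Lemma inord_ordK (i : 'I_m) : (inord i : 'I_m.+1) = i :> nat.
Proof. exact/inordK/leqW/ltn_ord. Qed.

Lemma inord_eq (i k : 'I_m) : (inord i == inord k :> 'I_m.+1) = (i == k).
Proof. by rewrite -val_eqE /= !inord_ordK. Qed.

Lemma inord_ord_max (i : 'I_m) : (inord i == ord_max :> 'I_m.+1) = false.
Proof. by apply/negbTE; rewrite -val_eqE /= inord_ordK ltn_eqF. Qed.

Lemma ord_max_inord (i : 'I_m) : (ord_max == inord i :> 'I_m.+1) = false.
Proof. by rewrite eq_sym inord_ord_max. Qed.

Definition rees_exp (j : 'I_n2) : 'X_{1..m.+1} :=
  if (j < m)%N then U_(inord j)%MM
  else if (j < m + m)%N then (U_(inord (j - m)) *+ B + U_(ord_max))%MM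
  else (\sum_(i < m) U_(inord i) *+ b i + U_(ord_max))%MM.

Definition rees_mnm U : 'X_{1..m.+1} := (\sum_(j < n2) rees_exp j *+ U j)%MM.

Lemma rees_imgE j : rees_img K b j = 'X_[rees_exp j].
Proof.
rewrite /rees_img /rees_exp; case: ifP => _ //.
case: ifP => _; first by rewrite /Tz /Zz mpolyXn -mpolyXD.
by rewrite mpolyXD /Tz /Zz mprodXnE.
Qed.

Lemma rees_mapX U : rees_map b ('X_[U] : Sring K m) = 'X_[rees_mnm U].
Proof.
rewrite /rees_map comp_mpolyX -mprodXnE; apply: eq_bigr => j _.
by rewrite tnth_mktuple rees_imgE.
Qed.

Lemma rees_mapB (p q : Sring K m) : rees_map b (p - q) = rees_map b p - rees_map b q.
Proof. exact: comp_mpolyB. Qed.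

Lemma rees_mapM (p q : Sring K m) : rees_map b (p * q) = rees_map b p * rees_map b q.
Proof. exact: rmorphM. Qed.

Lemma rees_mapE (p : Sring K m) :
  rees_map b p = \sum_(U <- msupp p) p@_U *: 'X_[rees_mnm U].
Proof.
rewrite {1}[p]mpolyE /rees_map raddf_sum /=; apply: eq_bigr => U _.
by rewrite comp_mpolyZ -/(rees_map b _) rees_mapX.
Qed.

Lemma rees_exp_t i : rees_exp (tvar i) = U_(inord i)%MM.
Proof. by rewrite /rees_exp tvarE ltn_ord. Qed.

Lemma rees_exp_x i : rees_exp (xvar i) = (U_(inord i) *+ B + U_(ord_max))%MM.
Proof. by rewrite /rees_exp xvarE ltnNge leq_addr ltn_add2l ltn_ord addKn. Qed.

Lemma rees_exp_w : rees_exp (wvar m) = (\sum_(i < m) U_(inord i) *+ b i + U_(ord_max))%MM.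
Proof. by rewrite /rees_exp wvarE ltnNge leq_addr ltnn. Qed.

Definition texp U (k : 'I_m) : nat := (U (tvar k) + B * U (xvar k) + b k * U (wvar m))%N.

Lemma rees_mnmT U (k : 'I_m) : rees_mnm U (inord k) = texp U k.
Proof.
rewrite mnm_sumE sum_rees_var /texp; congr (_ + _ + _)%N.
- under eq_bigr do rewrite mulmnE rees_exp_t mnm1E inord_eq.
  exact: sum_nat_delta.
- under eq_bigr do rewrite mulmnE rees_exp_x mnmDE mulmnE !mnm1E inord_eq ord_max_inord addn0 -mulnA.
  exact: sum_nat_delta.
- rewrite mulmnE rees_exp_w mnmDE mnm_sumE mnm1E ord_max_inord addn0.
  by under eq_bigr do rewrite mulmnE mnm1E inord_eq; rewrite sum_nat_delta.
Qed.

Lemma rees_mnmZ U : rees_mnm U ord_max = xwdeg U.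
Proof.
rewrite mnm_sumE sum_rees_var /xwdeg big1 ?add0n => [|i _]; last first.
  by rewrite mulmnE rees_exp_t mnm1E inord_ord_max.
congr (_ + _)%N.
- by apply: eq_bigr => i _; rewrite mulmnE rees_exp_x mnmDE mulmnE !mnm1E inord_ord_max eqxx mul1n.
- rewrite mulmnE rees_exp_w mnmDE mnm_sumE mnm1E eqxx big1 ?mul1n // => i _.
  by rewrite mulmnE mnm1E inord_ord_max.
Qed.

Lemma rees_mnmP U V : rees_mnm U = rees_mnm V <-> texp U =1 texp V /\ xwdeg U = xwdeg V.
Proof.
split => [eqUV | [eqT eqZ]].
  by split => [k|]; rewrite -(rees_mnmT, rees_mnmZ) eqUV (rees_mnmT, rees_mnmZ).
apply/mnmP => j; case: (unliftP ord_max j) => [k ->| ->]; last by rewrite !rees_mnmZ.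
have -> : lift ord_max k = inord k.
  by apply/val_inj; rewrite /= /bump leqNgt ltn_ord inord_ordK.
by rewrite !rees_mnmT.
Qed.

Lemma rees_mnmD U V : rees_mnm (U + V) = (rees_mnm U + rees_mnm V)%MM.
Proof.
apply/mnmP => k; rewrite mnmDE !mnm_sumE -big_split; apply: eq_bigr => j _.
by rewrite !mulmnE mnmDE mulnDr.
Qed.

Definition tdeg U : nat := (\sum_(i < m) U (tvar i))%N.

Lemma tdegD U V : tdeg (U + V) = (tdeg U + tdeg V)%N.
Proof. by rewrite /tdeg -big_split; apply: eq_bigr => i _; rewrite mnmDE. Qed.

Lemma sum_texp U : (\sum_k texp U k = tdeg U + B * xwdeg U)%N.
Proof.
rewrite /texp !big_split /= -big_distrr -big_distrl /= -/(bsum b) /xwdeg mulnDr.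
by rewrite mulnC addnA.
Qed.

Lemma rees_mnm_tdeg U V : rees_mnm U = rees_mnm V -> tdeg U = tdeg V.
Proof.
move=> /rees_mnmP [eqT eqZ]; apply/eqP.
by rewrite -(eqn_add2r (B * xwdeg U)) {2}eqZ -!sum_texp (eq_bigr _ (fun k _ => eqT k)).
Qed.

Definition L1_equiv U V := in_ideal_gen (reesL1 b) ('X_[U] - 'X_[V] : Sring K m).

Lemma L1_equiv_refl U : L1_equiv U U.
Proof. by rewrite /L1_equiv subrr; apply: in_ideal_gen0. Qed.

Lemma L1_equiv_sym U V : L1_equiv U V -> L1_equiv V U.
Proof. by move=> UV; rewrite /L1_equiv -opprB -mulN1r; apply: in_ideal_genMl. Qed.

Lemma L1_equiv_trans V U W : L1_equiv U V -> L1_equiv V W -> L1_equiv U W.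
Proof. by move=> UV VW; have := in_ideal_genD UV VW; rewrite addrA subrK. Qed.

Lemma binomial_reesL1 A A' : rees_mnm A = rees_mnm A' ->
  xwdeg A = 1%N -> xwdeg A' = 1%N -> reesL1 b ('X_[A] - 'X_[A'] : Sring K m).
Proof.
move=> eqA degA degA'; split; first by rewrite /reesL rees_mapB !rees_mapX eqA subrr.
by move=> M /msuppB_le; rewrite mem_cat !msuppX !inE => /orP[]/eqP->.
Qed.

Lemma L1_equiv_move U A A' : (A <= U)%MM -> rees_mnm A = rees_mnm A' ->
  xwdeg A = 1%N -> xwdeg A' = 1%N -> L1_equiv U (A' + (U - A))%MM.
Proof.
move=> AU eqA degA degA'; rewrite /L1_equiv -{1}(submK AU) addmC !mpolyXD -mulrBl mulrC.
exact/in_ideal_genMl/in_ideal_gen_mem/binomial_reesL1.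
Qed.

Lemma rees_mnm_move U A A' : (A <= U)%MM -> rees_mnm A = rees_mnm A' ->
  rees_mnm (A' + (U - A)) = rees_mnm U.
Proof. by move=> AU eqA; rewrite rees_mnmD -eqA -rees_mnmD addmC submK. Qed.

Definition mnmTXW (t x : 'I_m -> nat) (w : nat) : 'X_{1..n2} :=
  (\sum_(i < m) (U_(tvar i) *+ t i + U_(xvar i) *+ x i) + U_(wvar m) *+ w)%MM.

Section MonomialTXW.
Variables (t x : 'I_m -> nat) (w : nat).

Lemma mnmTXW_t k : mnmTXW t x w (tvar k) = t k.
Proof.
rewrite mnmDE mnm_sumE mulmnE mnm1E rees_varE mul0n addn0.
by under eq_bigr do rewrite mnmDE !mulmnE !mnm1E !rees_varE mul0n addn0; rewrite sum_nat_delta.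
Qed.

Lemma mnmTXW_x k : mnmTXW t x w (xvar k) = x k.
Proof.
rewrite mnmDE mnm_sumE mulmnE mnm1E rees_varE mul0n addn0.
by under eq_bigr do rewrite mnmDE !mulmnE !mnm1E !rees_varE mul0n add0n; rewrite sum_nat_delta.
Qed.

Lemma mnmTXW_w : mnmTXW t x w (wvar m) = w.
Proof.
rewrite mnmDE mnm_sumE mulmnE mnm1E eqxx mul1n big1 // => i _.
by rewrite mnmDE !mulmnE !mnm1E !rees_varE.
Qed.

Lemma texp_mnmTXW k : texp (mnmTXW t x w) k = (t k + B * x k + b k * w)%N.
Proof. by rewrite /texp mnmTXW_t mnmTXW_x mnmTXW_w. Qed.

Lemma xwdeg_mnmTXW : xwdeg (mnmTXW t x w) = (\sum_i x i + w)%N.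
Proof. by rewrite /xwdeg mnmTXW_w (eq_bigr _ (fun k _ => mnmTXW_x k)). Qed.

Lemma mnmTXW_le U : (forall k, t k <= U (tvar k))%N -> (forall k, x k <= U (xvar k))%N ->
  (w <= U (wvar m))%N -> (mnmTXW t x w <= U)%MM.
Proof.
move=> leT leX leW; apply/mnm_lepP => j.
by case: (rees_varP j) => [k|k|]; rewrite ?mnmTXW_t ?mnmTXW_x ?mnmTXW_w.
Qed.

Lemma tdeg_mnmTXW : tdeg (mnmTXW t x w) = (\sum_i t i)%N.
Proof. by apply: eq_bigr => k _; rewrite mnmTXW_t. Qed.

End MonomialTXW.

(* [mnm_WT i] is W T_i^(|b| - b_i) and [mnm_XTb i] is X_i prod_(k != i) T_k^b_k: both map
   to T_i^|b| prod_(k != i) T_k^b_k Z. *)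
Definition mnm_WT (i : 'I_m) := mnmTXW (fun k => (B - b i) * (k == i))%N (fun=> 0%N) 1.
Definition mnm_XTb (i : 'I_m) := mnmTXW (fun k => b k * (k != i))%N (fun k => k == i : nat) 0.
Definition mnm_XT (i j : 'I_m) := mnmTXW (fun k => B * (k == j))%N (fun k => k == i : nat) 0.

Lemma b_le_bsum i : (b i <= B)%N.
Proof. by rewrite /bsum (bigD1 i) //= leq_addr. Qed.

Lemma rees_mnm_WT_XTb i : rees_mnm (mnm_WT i) = rees_mnm (mnm_XTb i).
Proof.
apply/rees_mnmP; split => [k|]; last by rewrite !xwdeg_mnmTXW sum_delta big1.
rewrite !texp_mnmTXW; have := b_le_bsum i.
by case: (eqVneq k i) => [->|] /=; lia.
Qed.

Lemma xwdeg_mnm_WT i : xwdeg (mnm_WT i) = 1%N.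
Proof. by rewrite xwdeg_mnmTXW big1. Qed.

Lemma xwdeg_mnm_XTb i : xwdeg (mnm_XTb i) = 1%N.
Proof. by rewrite xwdeg_mnmTXW sum_delta. Qed.

Lemma rees_mnm_XT_sym i j : rees_mnm (mnm_XT i j) = rees_mnm (mnm_XT j i).
Proof. by apply/rees_mnmP; split => [k|]; rewrite ?texp_mnmTXW ?xwdeg_mnmTXW ?sum_delta //; lia. Qed.

Lemma xwdeg_mnm_XT i j : xwdeg (mnm_XT i j) = 1%N.
Proof. by rewrite xwdeg_mnmTXW sum_delta. Qed.

(* The pigeonhole threshold: [tdeg U > sum_i (|b| - b_i - 1)] forces
   [U (tvar i) >= |b| - b_i] for some [i]. *)
Definition big_tdeg U := ((m - 1) * B < tdeg U + m)%N.

Lemma sum_bsumB : (\sum_(i < m) (B - b i) = (m - 1) * B)%N.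
Proof.
have : (\sum_(i < m) (B - b i) + B = m * B)%N.
  rewrite {2}/bsum -big_split /= (eq_bigr (fun=> B)) => [|i _]; last by rewrite subnK ?b_le_bsum.
  by rewrite sum_nat_const card_ord.
by rewrite mulnBl mul1n; lia.
Qed.

Lemma big_tdeg_WT_le U : big_tdeg U -> (0 < U (wvar m))%N -> exists i, (mnm_WT i <= U)%MM.
Proof.
move=> bigU Uw; suff [i tUi] : exists i, (B - b i <= U (tvar i))%N.
  by exists i; apply: mnmTXW_le => // k; case: (eqVneq k i) => [->|]; rewrite ?muln1 ?muln0.
apply/existsP; move: bigU; apply: contraLR => /existsPn small.
rewrite /big_tdeg -leqNgt -sum_bsumB /tdeg -[X in (_ + X)%N]card_ord -sum1_card -big_split /=.
by apply: leq_sum => i _; rewrite addn1 ltnNge small.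
Qed.

Lemma big_tdeg_rees_mnm U V : rees_mnm U = rees_mnm V -> big_tdeg U = big_tdeg V.
Proof. by rewrite /big_tdeg => /rees_mnm_tdeg ->. Qed.

Lemma exists_Wfree_L1_equiv U : big_tdeg U ->
  exists V, [/\ L1_equiv U V, rees_mnm V = rees_mnm U & V (wvar m) = 0%N].
Proof.
have [n] := ubnP (U (wvar m)); elim: n U => // n IH U ltUw bigU.
have [Uw0 | Uw_gt0] := posnP (U (wvar m)); first by exists U; split => //; apply: L1_equiv_refl.
have [i AU] := big_tdeg_WT_le bigU Uw_gt0.
have eqA := rees_mnm_WT_XTb i; have eqU' := rees_mnm_move AU eqA.
set U' := (mnm_XTb i + (U - mnm_WT i))%MM.
have ltU'w : (U' (wvar m) < n)%N by rewrite mnmDE mnmBE !mnmTXW_w; lia.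
have [V [U'V eqV Vw]] := IH U' ltU'w (etrans (big_tdeg_rees_mnm eqU') bigU).
exists V; split => //; last by rewrite eqV eqU'.
exact: L1_equiv_trans (L1_equiv_move AU eqA (xwdeg_mnm_WT i) (xwdeg_mnm_XTb i)) U'V.
Qed.

Lemma Wfree_fiber_eq U V : rees_mnm U = rees_mnm V -> U (wvar m) = 0%N ->
  V (wvar m) = 0%N -> (forall k, U (xvar k) <= V (xvar k))%N -> U = V.
Proof.
move=> /rees_mnmP [eqT eqZ] Uw Vw leUV.
have eqX : forall k, U (xvar k) = V (xvar k).
  move: eqZ; rewrite /xwdeg Uw Vw !addn0 => /eqP.
  by rewrite (leqif_sum (fun k _ => leqif_eq (leUV k))).2 => /forallP eqX k; apply/eqP/eqX.
apply: rees_mnm_ext => [k|//|]; last by rewrite Uw Vw.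
by move: (eqT k); rewrite /texp Uw Vw eqX => /addIn /addIn.
Qed.

Lemma L1_equiv_Wfree_fiber U V : rees_mnm U = rees_mnm V -> U (wvar m) = 0%N ->
  V (wvar m) = 0%N -> L1_equiv U V.
Proof.
move=> + Uw Vw; have [n] := ubnP (\sum_k (U (xvar k) - V (xvar k)))%N.
elim: n U Uw => // n IH U Uw ltn UV.
have [/existsP [i xVi] | /existsPn noi] := boolP [exists i, V (xvar i) < U (xvar i)]%N; last first.
  by rewrite (Wfree_fiber_eq UV Uw Vw) => [|k]; [apply: L1_equiv_refl | rewrite leqNgt noi].
have [j xUj] : exists j, (U (xvar j) < V (xvar j))%N.
  apply/existsP; apply: contraT => /existsPn noj; move: xVi.
  by rewrite (Wfree_fiber_eq (esym UV) Vw Uw) ?ltnn // => k; rewrite leqNgt noj.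
have ij : i != j by apply: contraTneq xVi => ->; rewrite -leqNgt ltnW.
have tUj : (B <= U (tvar j))%N.
  by case/rees_mnmP: UV => /(_ j) + _; rewrite /texp Uw Vw !muln0 !addn0; nia.
have AU : (mnm_XT i j <= U)%MM.
  apply: mnmTXW_le => [k|k|//].
    by case: (eqVneq k j) => [->|]; rewrite ?muln1 ?muln0.
  by case: (eqVneq k i) => [->|] //=; rewrite (leq_ltn_trans _ xVi).
have eqA := rees_mnm_XT_sym i j.
set U' := (mnm_XT j i + (U - mnm_XT i j))%MM.
have U'w : U' (wvar m) = 0%N by rewrite mnmDE mnmBE !mnmTXW_w Uw.
have sumU' : (\sum_k (U' (xvar k) - V (xvar k)) + 1 = \sum_k (U (xvar k) - V (xvar k)))%N.
  rewrite -(sum_delta i) -big_split; apply: eq_bigr => k _ /=; rewrite mnmDE mnmBE !mnmTXW_x.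
  case: (eqVneq k i) => [->|ki]; first by rewrite (negbTE ij) /=; lia.
  by case: (eqVneq k j) => [->|kj] /=; lia.
apply: L1_equiv_trans (L1_equiv_move AU eqA (xwdeg_mnm_XT i j) (xwdeg_mnm_XT j i)) _.
by apply: IH => //; [move: ltn; rewrite -sumU' addn1 ltnS | rewrite rees_mnm_move].
Qed.

Lemma L1_equiv_fiber U V : rees_mnm U = rees_mnm V -> big_tdeg U -> L1_equiv U V.
Proof.
move=> UV bigU; have bigV : big_tdeg V by rewrite -(big_tdeg_rees_mnm UV).
have [U0 [UU0 U0U U0w]] := exists_Wfree_L1_equiv bigU.
have [V0 [VV0 V0V V0w]] := exists_Wfree_L1_equiv bigV.
apply: L1_equiv_trans UU0 (L1_equiv_trans _ (L1_equiv_sym VV0)).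
by apply: L1_equiv_Wfree_fiber; rewrite ?U0U ?V0V.
Qed.

Lemma reesL_in_ideal_L1 (p : Sring K m) : reesL b p -> {in msupp p, forall U, big_tdeg U} ->
  in_ideal_gen (reesL1 b) p.
Proof.
move=> pL bigp; pose rep := fiber_rep rees_mnm (msupp p).
have -> : p = \sum_(U <- msupp p) p@_U *: ('X_[U] - 'X_[rep (rees_mnm U)]) +
              \sum_(U <- msupp p) p@_U *: 'X_[rep (rees_mnm U)].
  by rewrite -big_split {1}[p]mpolyE; apply: eq_bigr => U _; rewrite /= scalerBr subrK.
rewrite fiber_rep_sum_eq0 ?addr0; last by rewrite -rees_mapE.
apply: in_ideal_gen_sum => U Up; rewrite -mul_mpolyC; apply: in_ideal_genMl.
by apply: L1_equiv_fiber; rewrite ?phi_fiber_rep ?bigp.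
Qed.

Lemma in_ideal_L1_reesL (p : Sring K m) :
  in_ideal_gen (reesL1 b) p -> reesL b p.
Proof.
move=> [s [sL1 ->]]; rewrite /reesL /rees_map raddf_sum big_seq big1 //= => x /sL1 [x2L _].
by rewrite -/(rees_map b _) rees_mapM x2L mulr0.
Qed.

Lemma Tprod_expE l :
  Tprod K m ^+ l = 'X_[mnmTXW (fun=> l) (fun=> 0%N) 0].
Proof.
rewrite /Tprod mprodXE mpolyXn; congr 'X_[_]; apply/mnmP => j; rewrite mulmnE mnm_sumE.
under eq_bigr do rewrite mnm1E.
by case: (rees_varP j) => [k|k|]; rewrite ?mnmTXW_t ?mnmTXW_x ?mnmTXW_w;
  under eq_bigr do rewrite rees_varE; rewrite ?sum_delta ?mul1n // big1.
Qed.

Lemma big_tdeg_of_bound l U : (0 < m)%N ->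
  ((m - 1) * (B - 1) <= m * l)%N -> (m * l <= tdeg U)%N -> big_tdeg U.
Proof.
move=> m_gt0 lbound lU; rewrite /big_tdeg; case: B lbound => [|B'] /=; first by lia.
by rewrite subn1 /= mulnS; lia.
Qed.

End ReesAlgebra.

Theorem corollary4p2 (K : fieldType) (m : nat) (b : 'I_m -> nat) (l : nat) :
  (3 <= m)%N ->
  (exists i j : 'I_m, [/\ i != j, b i != 0%N & b j != 0%N]) ->
  ((m - 1) * (bsum b - 1) <= m * l)%N ->
  forall g : {mpoly K[(m + m).+1]},
    in_colon (reesL1 b) (Tprod K m ^+ l) g <-> reesL b g.
Proof.
move=> m_ge3 _ lbound g; rewrite /in_colon Tprod_expE.
set D := mnmTXW _ _ _.
split => [/in_ideal_L1_reesL | gL].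
  by rewrite /reesL rees_mapM rees_mapX => /mpolyMX_eq0.
apply: reesL_in_ideal_L1; first by rewrite /reesL rees_mapM gL mul0r.
move=> U; rewrite (perm_mem (msuppMX g D)) => /mapP [V _ ->].
apply: (big_tdeg_of_bound _ lbound); first by lia.
by rewrite tdegD tdeg_mnmTXW sum_nat_const card_ord leq_addr.
Qed.
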